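(* Let $\Sigma=(\sigma_1,\dots,\sigma_k)$ be a mixed substitution system on a finite set of prototiles $\mathcal{F}$ in $\mathbb{R}^d$. Then $\mathbb{X}_{\Sigma,\Omega}\subset\mathbb{Y}_{\Sigma,\Omega}$.
   Context: Tiles are compact sets equal to the closure of their interior; patches are tessellations of bounded sets by tiles with pairwise disjoint interiors, tilings are tessellations of $\mathbb{R}^d$. $\mathcal{F}=\{T_1,\dots,T_n\}$ is a finite set of prototiles and $\mathcal{F}^*$ the set of patches of translates of prototiles up to translation. A substitution rule with inflation factor $\xi>1$ is a map $\sigma:\mathcal{F}\to\mathcal{F}^*$ with $\operatorname{supp}\sigma(T_i)=\xi T_i$, extended to patches tile by tile ($T_i+t\mapsto\sigma(T_i)+\xi t$); it is primitive if some power of its substitution matrix (entries $a_{ij}=$ number of tiles that are translates of $T_i$ in $\sigma(T_j)$) is strictly positive. A mixed substitution system is a tuple $\Sigma=(\sigma_1,\dots,\sigma_k)$ of primitive substitution rules on $\mathcal{F}$. Let $\mathcal{A}=\{1,\dots,k\}$, $\Omega=\mathcal{A}^{\mathbb{N}}$, and $w(m)=(w_1,\dots,w_m)$. For a finite word $a=(a_1,\dots,a_m)$ define $a.P=\sigma_{a_1}(\sigma_{a_2}(\cdots\sigma_{a_m}(P)\cdots))$ (left action) and $P.a=\sigma_{a_m}(\sigma_{a_{m-1}}(\cdots\sigma_{a_1}(P)\cdots))$ (right action). For $w\in\Omega$ let $\mathcal{P}_w=\{w(m).T:T\in\mathcal{F},m\in\mathbb{N}\}$ and $\mathcal{R}_w=\{T.w(m):T\in\mathcal{F},m\in\mathbb{N}\}$.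 $\mathbb{X}_{\Sigma,w}$ (resp. $\mathbb{Y}_{\Sigma,w}$) is the set of tilings of $\mathbb{R}^d$ every finite patch of which is a translate of a sub-patch of some element of $\mathcal{P}_w$ (resp. $\mathcal{R}_w$), and $\mathbb{X}_{\Sigma,\Omega}=\bigcup_{w\in\Omega}\mathbb{X}_{\Sigma,w}$, $\mathbb{Y}_{\Sigma,\Omega}=\bigcup_{w\in\Omega}\mathbb{Y}_{\Sigma,w}$. *)

From HB Require Import structures.
From mathcomp Require Import all_boot all_order all_algebra.
From mathcomp Require Import all_classical all_reals all_analysis.
Set Implicit Arguments. Unset Strict Implicit. Unset Printing Implicit Defensive.
Import Order.TTheory GRing.Theory Num.Theory numFieldNormedType.Exports.
Local Open Scope classical_set_scope.
Local Open Scope ring_scope.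

Section Tilings.
Context {R : realType} {d : nat}.
Notation V := 'rV[R]_d.

Definition is_tile (A : set V) : Prop := compact A /\ A = closure (interior A).

Definition translate (A : set V) (t : V) : set V := [set x + t | x in A].
Definition dilate (xi : R) (A : set V) : set V := [set xi *: x | x in A].

Context {n : nat}.
(* The prototiles T_1,...,T_n are given as T : 'I_n -> set V.
   A patch of translates of prototiles is given by a list of labelled
   translates (i, t), standing for the tile T_i + t. *)
Definition lpatch := seq ('I_n * V).

Definition tile_of (T : 'I_n -> set V) (p : 'I_n * V) : set V := translate (T p.1) p.2.

Definition support (T : 'I_n -> set V) (P : lpatch) : set V :=
  [set x | exists2 p, p \in P & tile_of T p x].

Definition tiles_of (T : 'I_n -> set V) (P : lpatch) : set (set V) :=
  [set tile_of T p | p in [set p | p \in P]].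

Definition is_patch (T : 'I_n -> set V) (P : lpatch) : Prop :=
  uniq P /\
  forall p q, p \in P -> q \in P -> p != q ->
    interior (tile_of T p) `&` interior (tile_of T q) = set0.

(* F = {T_1,...,T_n}: a finite set of (pairwise distinct) tiles *)
Definition is_prototile_set (T : 'I_n -> set V) : Prop :=
  (forall i, is_tile (T i)) /\ injective T.

Definition is_subst_rule (T : 'I_n -> set V) (xi : R) (sigma : 'I_n -> lpatch) : Prop :=
  1 < xi /\
  forall i, is_patch T (sigma i) /\ support T (sigma i) = dilate xi (T i).

Definition subst_patch (sigma : 'I_n -> lpatch) (xi : R) (P : lpatch) : lpatch :=
  flatten [seq [seq (q.1, q.2 + xi *: p.2) | q <- sigma p.1] | p <- P].

Definition subst_mx (sigma : 'I_n -> lpatch) : 'M[int]_n :=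
  \matrix_(i, j) (count (fun q : 'I_n * V => q.1 == i) (sigma j))%:Z.

Definition primitive (sigma : 'I_n -> lpatch) : Prop :=
  exists p : nat, forall i j, 0 < (subst_mx sigma ^+ p.+1) i j.

Context {k : nat}.

Definition is_mixed_system (T : 'I_n -> set V) (xi : 'I_k -> R)
    (sig : 'I_k -> 'I_n -> lpatch) : Prop :=
  forall a, is_subst_rule T (xi a) (sig a) /\ primitive (sig a).

(* a.P = sigma_{a_1}(... sigma_{a_m}(P)) *)
Definition left_act (xi : 'I_k -> R) (sig : 'I_k -> 'I_n -> lpatch)
    (a : seq 'I_k) (P : lpatch) : lpatch :=
  foldr (fun b Q => subst_patch (sig b) (xi b) Q) P a.

(* P.a = sigma_{a_m}(... sigma_{a_1}(P)) *)
Definition right_act (xi : 'I_k -> R) (sig : 'I_k -> 'I_n -> lpatch)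
    (P : lpatch) (a : seq 'I_k) : lpatch :=
  foldl (fun Q b => subst_patch (sig b) (xi b) Q) P a.

(* Omega = A^N, w(m) = (w_1,...,w_m) *)
Definition word_prefix (w : nat -> 'I_k) (m : nat) : seq 'I_k := mkseq w m.

Definition proto (i : 'I_n) : lpatch := [:: (i, 0)].

Definition Pw (xi : 'I_k -> R) (sig : 'I_k -> 'I_n -> lpatch) (w : nat -> 'I_k)
  : set lpatch :=
  [set Q | exists (i : 'I_n) (m : nat), Q = left_act xi sig (word_prefix w m) (proto i)].

Definition Rw (xi : 'I_k -> R) (sig : 'I_k -> 'I_n -> lpatch) (w : nat -> 'I_k)
  : set lpatch :=
  [set Q | exists (i : 'I_n) (m : nat), Q = right_act xi sig (proto i) (word_prefix w m)].

Definition is_tiling (x : set (set V)) : Prop :=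
  (forall S, x S -> is_tile S) /\
  (forall z : V, exists2 S, x S & S z) /\
  (forall S S', x S -> x S' -> S <> S' -> interior S `&` interior S' = set0).

Definition legal_in (T : 'I_n -> set V) (L : set lpatch) (P : set (set V)) : Prop :=
  exists2 Q, L Q &
    exists t : V, [set translate S t | S in P] `<=` tiles_of T Q.

Definition hull (T : 'I_n -> set V) (L : set lpatch) : set (set (set V)) :=
  [set x | is_tiling x /\
     forall P : set (set V), finite_set P -> P `<=` x -> legal_in T L P].

Definition XX (T : 'I_n -> set V) (xi : 'I_k -> R) (sig : 'I_k -> 'I_n -> lpatch)
    (w : nat -> 'I_k) := hull T (Pw xi sig w).
Definition YY (T : 'I_n -> set V) (xi : 'I_k -> R) (sig : 'I_k -> 'I_n -> lpatch)
    (w : nat -> 'I_k) := hull T (Rw xi sig w).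

Definition XOmega T xi sig : set (set (set V)) := [set x | exists w, XX T xi sig w x].
Definition YOmega T xi sig : set (set (set V)) := [set x | exists w, YY T xi sig w x].

End Tilings.

(* Concatenate the reversed prefixes into one word
   w' = rev w(0) ++ rev w(1) ++ ..., so that the right action of a prefix of
   w' ending with rev w(m) is w(m).(T_j.u) for a shorter prefix u.  By
   primitivity, T_j.u contains a tile of every type i for a suitable j, hence
   w(m).(T_j.u) contains a translate of w(m).T_i.  So every patch of x is
   also legal for R_{w'}, i.e. x lies in Y_{Sigma,w'}. *)
From mathcomp Require Import all_boot all_order all_algebra.
From mathcomp Require Import all_classical all_reals all_analysis.
Set Implicit Arguments. Unset Strict Implicit. Unset Printing Implicit Defensive.
Local Open Scope classical_set_scope.

Import Order.TTheory GRing.Theory.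

Section ConcatWord.
Variables (A : Type) (x0 : A) (f : nat -> seq A).

Definition concat_upto (N : nat) : seq A := flatten (mkseq f N).

Lemma concat_uptoS N : concat_upto N.+1 = concat_upto N ++ f N.
Proof. by rewrite /concat_upto mkseqS flatten_rcons. Qed.

Lemma concat_upto_prefix N1 N2 :
  N1 <= N2 -> exists r, concat_upto N2 = concat_upto N1 ++ r.
Proof.
move/subnKC <-; elim: (N2 - N1) => [|e [r IH]].
  by exists [::]; rewrite addn0 cats0.
by exists (r ++ f (N1 + e)); rewrite addnS concat_uptoS IH catA.
Qed.

Lemma nth_concat_upto_stable N1 N2 p : N1 <= N2 -> p < size (concat_upto N1) ->
  nth x0 (concat_upto N2) p = nth x0 (concat_upto N1) p.
Proof. by move=> /concat_upto_prefix [r ->] ltp; rewrite nth_cat ltp. Qed.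

Hypothesis size_block : forall m, m <= size (f m).

(* Block p.+1 alone has length > p, so position p is already determined. *)
Definition concat_word (p : nat) : A := nth x0 (concat_upto p.+2) p.

Lemma concat_word_prefix N : mkseq concat_word (size (concat_upto N)) = concat_upto N.
Proof.
apply: (@eq_from_nth _ x0); rewrite size_mkseq // => p ltp.
have ltp2 : p < size (concat_upto p.+2).
  by rewrite concat_uptoS size_cat ltn_addl.
rewrite nth_mkseq // /concat_word.
have [le|/ltnW le] := leqP N p.+2; first by rewrite (nth_concat_upto_stable le ltp).
by rewrite (nth_concat_upto_stable le ltp2).
Qed.

End ConcatWord.

Section Patches.
Variables (R : realType) (d n : nat).
Notation V := 'rV[R]_d.
Local Open Scope ring_scope.

Lemma translate_translate (S : set V) t s :
  translate (translate S t) s = translate S (t + s).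
Proof.
apply/seteqP; split => x /=.
- by case=> y [z Sz <-] <-; exists z => //; rewrite addrA.
- by case=> z Sz <-; exists (z + t); [exists z|]; rewrite ?addrA.
Qed.

Lemma tile_of_shift (T : 'I_n -> set V) (q : 'I_n * V) s :
  tile_of T (q.1, q.2 + s) = translate (tile_of T q) s.
Proof. by rewrite /tile_of translate_translate. Qed.

Definition shifted_subpatch (Q Q' : seq ('I_n * V)) : Prop :=
  exists s : V, forall q, q \in Q -> (q.1, q.2 + s) \in Q'.

Lemma legal_in_shifted (T : 'I_n -> set V) (L L' : set (seq ('I_n * V))) :
  (forall Q, L Q -> exists2 Q', L' Q' & shifted_subpatch Q Q') ->
  forall P, legal_in T L P -> legal_in T L' P.
Proof.
move=> LL' P [Q /LL' [Q' L'Q' [s QQ']] [t PQ]].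
exists Q' => //; exists (t + s) => _ [S PS <-].
have [q Qq qS] := PQ _ (ex_intro2 _ _ S PS erefl).
exists (q.1, q.2 + s); first exact: QQ'.
by rewrite tile_of_shift qS translate_translate.
Qed.

Lemma hull_shifted (T : 'I_n -> set V) (L L' : set (seq ('I_n * V))) :
  (forall Q, L Q -> exists2 Q', L' Q' & shifted_subpatch Q Q') ->
  hull T L `<=` hull T L'.
Proof.
move=> LL' x [tx legx]; split=> // P fP Px.
exact: (legal_in_shifted LL' (legx P fP Px)).
Qed.

Lemma mem_subst_patch (sigma : 'I_n -> seq ('I_n * V)) xi P p r :
  p \in P -> r \in sigma p.1 -> (r.1, r.2 + xi *: p.2) \in subst_patch sigma xi P.
Proof.
move=> Pp sr; apply/flattenP; exists [seq (q.1, q.2 + xi *: p.2) | q <- sigma p.1].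
  exact: (map_f _ Pp).
exact: (map_f (fun q : 'I_n * V => (q.1, q.2 + xi *: p.2)) sr).
Qed.

Lemma subst_patchP (sigma : 'I_n -> seq ('I_n * V)) xi P q :
  q \in subst_patch sigma xi P ->
  exists2 p, p \in P & exists2 r, r \in sigma p.1 & q = (r.1, r.2 + xi *: p.2).
Proof. by case/flattenP=> _ /mapP [p Pp ->] /mapP [r sr ->]; exists p => //; exists r. Qed.

(* A zero row i of the substitution matrix would stay zero in every power. *)
Lemma primitive_occurs (sigma : 'I_n -> seq ('I_n * V)) :
  primitive sigma -> forall i, exists j r, (i, r) \in sigma j.
Proof.
move=> [p prim] i; have := prim i i; rewrite exprS -mulmxE mxE.
apply: contraPP => no_i; rewrite big1 ?ltxx // => j _; rewrite mxE.
suff -> : count (fun q : 'I_n * V => q.1 == i) (sigma j) = 0 by rewrite mul0r.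
apply/eqP; rewrite -leqn0 leqNgt -has_count; apply/hasP => -[q sq /eqP qi].
by apply: no_i; exists j, q.2; rewrite -qi -surjective_pairing.
Qed.

Variables (k : nat) (xi : 'I_k -> R) (sig : 'I_k -> 'I_n -> seq ('I_n * V)).

Lemma left_act_occurs : (forall a, primitive (sig a)) ->
  forall u i, exists j s, (i, s) \in left_act xi sig u (proto j).
Proof.
move=> prim; elim=> [|a u IH] i; first by exists i, 0; rewrite mem_seq1.
have [j [r sr]] := primitive_occurs (prim a) i.
have [j' [s us]] := IH j.
by exists j', (r + xi a *: s); exact: (mem_subst_patch (xi a) us sr).
Qed.

Lemma left_act_shifted_subpatch u P i s : (i, s) \in P ->
  shifted_subpatch (left_act xi sig u (proto i)) (left_act xi sig u P).
Proof.
move=> Ps; elim: u => [|a u [s' IH]].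
  by exists s => q; rewrite mem_seq1 => /eqP -> /=; rewrite add0r.
exists (xi a *: s') => q /subst_patchP [p up [r sr ->]] /=.
by rewrite -addrA -scalerDr; exact: (mem_subst_patch (xi a) (IH p up) sr).
Qed.

Lemma right_act_left_act P u : right_act xi sig P u = left_act xi sig (rev u) P.
Proof. by rewrite /right_act /left_act -{1}(revK u) foldl_rev. Qed.

Lemma right_act_cat P u v :
  right_act xi sig P (u ++ v) = right_act xi sig (right_act xi sig P u) v.
Proof. exact: foldl_cat. Qed.

End Patches.

Theorem lemma6p2 (R : realType) (d n k : nat) (T : 'I_n -> set 'rV[R]_d)
    (xi : 'I_k -> R) (sig : 'I_k -> 'I_n -> seq ('I_n * 'rV[R]_d)) :
  is_prototile_set T -> is_mixed_system T xi sig ->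
  XOmega T xi sig `<=` YOmega T xi sig.
Proof.
move=> _ mixed x [w Xx].
have prim a : primitive (sig a) by case: (mixed a).
pose block m := rev (word_prefix w m).
have size_block m : m <= size (block m) by rewrite size_rev size_mkseq.
pose w' := concat_word (w 0) block.
exists w'; apply: hull_shifted Xx => _ [i [m ->]].
pose u := concat_upto block m.
have [j [s u_i]] := left_act_occurs xi prim (rev u) i.
rewrite -right_act_left_act in u_i.
exists (right_act xi sig (proto j) (word_prefix w' (size (concat_upto block m.+1)))).
  by exists j, (size (concat_upto block m.+1)).
rewrite /word_prefix /w' (concat_word_prefix (w 0) size_block) concat_uptoS.
rewrite right_act_cat right_act_left_act revK.
exact: left_act_shifted_subpatch u_i.
Qed.
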